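(* Let $\psi:\mathbb{H}\to\mathbb{H}$ be a linear isometry. The pair $(\varphi,\psi)=(\sigma_{\mathbb{H}},\psi)$ satisfies (i) $\varphi(\varphi(x)x)=\varphi(x)x$ for all $x$, (ii) $\varphi(\bar x\psi(x))=\bar x\psi(x)$ for all $x$, (iii) $\psi(\psi(y)\bar x+y\varphi(x))=\psi(y)\bar x+y\varphi(x)$ for all $x,y$, if and only if $\psi=\pm I_{\mathbb{H}}$.
   Context: $\sigma_{\mathbb{H}}(x)=\bar x$ is quaternion conjugation on $\mathbb{H}$; $I_{\mathbb{H}}$ is the identity. *)

From mathcomp Require Import all_boot all_order all_algebra.
From mathcomp Require Import reals.
Set Implicit Arguments. Unset Strict Implicit. Unset Printing Implicit Defensive.
Import Order.TTheory GRing.Theory Num.Theory.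
Local Open Scope ring_scope.

(* q = q0 + q1 i + q2 j + q3 k *)
Record quat (R : realType) := Quat { q0 : R; q1 : R; q2 : R; q3 : R }.

Section Quat.
Variable R : realType.
Implicit Types x y : quat R.

Definition qadd x y := Quat (q0 x + q0 y) (q1 x + q1 y) (q2 x + q2 y) (q3 x + q3 y).
Definition qopp x := Quat (- q0 x) (- q1 x) (- q2 x) (- q3 x).
Definition qscale (a : R) x := Quat (a * q0 x) (a * q1 x) (a * q2 x) (a * q3 x).

(* Hamilton product: i^2 = j^2 = k^2 = ijk = -1 *)
Definition qmul x y :=
  Quat (q0 x * q0 y - q1 x * q1 y - q2 x * q2 y - q3 x * q3 y)
       (q0 x * q1 y + q1 x * q0 y + q2 x * q3 y - q3 x * q2 y)
       (q0 x * q2 y - q1 x * q3 y + q2 x * q0 y + q3 x * q1 y)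
       (q0 x * q3 y + q1 x * q2 y - q2 x * q1 y + q3 x * q0 y).

Definition qconj x := Quat (q0 x) (- q1 x) (- q2 x) (- q3 x).

Definition qnorm x := Num.sqrt (q0 x ^+ 2 + q1 x ^+ 2 + q2 x ^+ 2 + q3 x ^+ 2).

Definition qlinear (f : quat R -> quat R) :=
  (forall x y, f (qadd x y) = qadd (f x) (f y)) /\
  (forall (a : R) x, f (qscale a x) = qscale a (f x)).

Definition qisometry (f : quat R -> quat R) := forall x, qnorm (f x) = qnorm x.
End Quat.

(* Condition (ii) says that [conj x * psi x] is real for every [x], i.e. that
   every quaternion is an eigenvector of [psi]; testing this on the basis
   [1, i, j, k] and on [1 + i, 1 + j, 1 + k] forces [psi = c I] with
   [c = q0 (psi 1)], and the isometry condition gives [|c| = 1]. Conversely,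
   [conj x * x] is real, and for [psi = -I] the argument of [psi] in (iii)
   vanishes. *)
From mathcomp Require Import all_boot all_order all_algebra.
From mathcomp Require Import reals.
From mathcomp Require Import ring lra.
Set Implicit Arguments. Unset Strict Implicit. Unset Printing Implicit Defensive.
Import Order.TTheory GRing.Theory Num.Theory.
Local Open Scope ring_scope.

Section QuatFacts.
Variable R : realType.
Implicit Types (x w : quat R) (c : R).

Definition qone : quat R := Quat 1 0 0 0.
Definition qI : quat R := Quat 0 1 0 0.
Definition qJ : quat R := Quat 0 0 1 0.
Definition qK : quat R := Quat 0 0 0 1.

Lemma quatP (a b : quat R) :
  q0 a = q0 b -> q1 a = q1 b -> q2 a = q2 b -> q3 a = q3 b -> a = b.
Proof. by case: a; case: b => /= ???? ???? -> -> -> ->. Qed.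

Lemma qconj_fixed w : qconj w = w -> [/\ q1 w = 0, q2 w = 0 & q3 w = 0].
Proof.
move=> Hw; have /= h1 : q1 (qconj w) = q1 w by rewrite Hw.
have /= h2 : q2 (qconj w) = q2 w by rewrite Hw.
have /= h3 : q3 (qconj w) = q3 w by rewrite Hw.
split; lra.
Qed.

Lemma qconj_mul_qconj x : qconj (qmul (qconj x) x) = qmul (qconj x) x.
Proof. by apply: quatP => /=; ring. Qed.

Lemma qnorm_scale c x : qnorm (qscale c x) = `|c| * qnorm x.
Proof.
rewrite /qnorm /= !exprMn -!mulrDr sqrtrM ?sqr_ge0 //.
by rewrite sqrtr_sqr.
Qed.

Lemma qnorm_one : qnorm qone = 1.
Proof. by rewrite /qnorm /= expr1n !expr0n /= !addr0 sqrtr1. Qed.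

Lemma quat_basis_expand x :
  x = qadd (qadd (qadd (qscale (q0 x) qone) (qscale (q1 x) qI))
                 (qscale (q2 x) qJ)) (qscale (q3 x) qK).
Proof. by case: x => a b c d; apply: quatP => /=; ring. Qed.

End QuatFacts.

Arguments qone {R}.
Arguments qI {R}.
Arguments qJ {R}.
Arguments qK {R}.

Section LinearMaps.
Variables (R : realType) (f : quat R -> quat R).
Hypothesis flin : qlinear f.

Lemma qlinear_expand x :
  f x = qadd (qadd (qadd (qscale (q0 x) (f qone)) (qscale (q1 x) (f qI)))
                   (qscale (q2 x) (f qJ))) (qscale (q3 x) (f qK)).
Proof.
by case: flin => fD fZ; rewrite {1}[x]quat_basis_expand !fD !fZ.
Qed.

Lemma qlinear_scalar_on_basis c :
  f qone = qscale c qone -> f qI = qscale c qI ->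
  f qJ = qscale c qJ -> f qK = qscale c qK ->
  forall x, f x = qscale c x.
Proof.
move=> f1 fi fj fk x.
by rewrite qlinear_expand f1 fi fj fk; apply: quatP => /=; ring.
Qed.

(* Pairing [x] with [1 + x] shows that all basis eigenvalues equal that of [1]. *)
Lemma conj_mul_real_scalar :
  (forall x, qconj (qmul (qconj x) (f x)) = qmul (qconj x) (f x)) ->
  forall x, f x = qscale (q0 (f qone)) x.
Proof.
move=> hreal; case: (flin) => fD _.
have [a1 a2 a3] := qconj_fixed (hreal qone).
have [b1 b2 b3] := qconj_fixed (hreal qI).
have [c1 c2 c3] := qconj_fixed (hreal qJ).
have [d1 d2 d3] := qconj_fixed (hreal qK).
have [e1 e2 e3] := qconj_fixed (hreal (qadd qone qI)).
have [g1 g2 g3] := qconj_fixed (hreal (qadd qone qJ)).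
have [h1 h2 h3] := qconj_fixed (hreal (qadd qone qK)).
move: e1 e2 e3 g1 g2 g3 h1 h2 h3; rewrite !fD.
move: a1 a2 a3 b1 b2 b3 c1 c2 c3 d1 d2 d3 => /= *.
by apply: qlinear_scalar_on_basis; apply: quatP => /=; lra.
Qed.

End LinearMaps.

Lemma norm_eq1 (R : realType) (c : R) : `|c| = 1 -> c = 1 \/ c = -1.
Proof. by move/eqP; rewrite eqr_norml ler01 andbT => /orP[] /eqP; auto. Qed.

Theorem lemma11 (R : realType) (psi : quat R -> quat R)
  (hlin : qlinear psi) (hiso : qisometry psi) :
  let phi := @qconj R in
  ((forall x, phi (qmul (phi x) x) = qmul (phi x) x) /\
   (forall x, phi (qmul (qconj x) (psi x)) = qmul (qconj x) (psi x)) /\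
   (forall x y, psi (qadd (qmul (psi y) (qconj x)) (qmul y (phi x)))
                = qadd (qmul (psi y) (qconj x)) (qmul y (phi x))))
  <-> ((forall x, psi x = x) \/ (forall x, psi x = qopp x)).
Proof.
move=> phi; split.
- case=> _ [hreal _].
  have psiZ := conj_mul_real_scalar hlin hreal.
  set c := q0 (psi qone) in psiZ.
  have /norm_eq1 [c1 | cN1] : `|c| = 1.
    by have := hiso qone; rewrite psiZ qnorm_scale qnorm_one mulr1.
  + by left=> x; rewrite psiZ c1; apply: quatP => /=; rewrite mul1r.
  + by right=> x; rewrite psiZ cN1; apply: quatP => /=; rewrite mulN1r.
- case=> hpsi; split; try exact: qconj_mul_qconj.
  + by split=> [x | x y]; rewrite !hpsi //; exact: qconj_mul_qconj.
  + by split=> [x | x y]; rewrite !hpsi /phi; apply: quatP => /=; ring.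
Qed.
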